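(* Let $T$ be a positive linear map on $\mathcal{M}_d(\mathbb{C})$ which is not completely positive. Then there exists $Y\in\mathcal{M}_d(\mathbb{C})$ such that the map $T'(\rho):=Y^\dagger T(\rho)Y$ is positive but its matrix representation $\hat T'$ (as an operator on $\mathcal{M}_d(\mathbb{C})$) satisfies $\mathrm{tr}[\hat T']<0$. In particular, the first moment of the spectrum of a positive map can be negative.
   Context: Positive: maps positive semidefinite matrices to positive semidefinite matrices; completely positive: $T\otimes\mathrm{id}_d$ is positive. $\mathrm{tr}[\hat T']$ equals the sum of the eigenvalues of $T'$ counted with algebraic multiplicity. *)

(* Scalars: an arbitrary numClosedFieldType C (models the complex numbers). *)
From HB Require Import structures.
From mathcomp Require Import all_boot all_order all_algebra.
Set Implicit Arguments. Unset Strict Implicit. Unset Printing Implicit Defensive.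
Import Order.TTheory GRing.Theory Num.Theory.
Local Open Scope ring_scope.

Definition psd_on (C : numClosedFieldType) (I : finType) (A : I -> I -> C) : Prop :=
  (forall i j, A j i = Num.conj (A i j)) /\
  (forall v : I -> C, 0 <= \sum_(i : I) \sum_(j : I) Num.conj (v i) * A i j * v j).

Definition psd (C : numClosedFieldType) (d : nat) (A : 'M[C]_d) : Prop :=
  psd_on (fun i j => A i j).

Definition positive_map (C : numClosedFieldType) (d : nat)
  (T : 'M[C]_d -> 'M[C]_d) : Prop :=
  forall A : 'M[C]_d, psd A -> psd (T A).

(* (T ⊗ id_d) acting on M_d ⊗ M_d, whose elements are written as
   X : ('I_d * 'I_d) -> ('I_d * 'I_d) -> C, with X (i,k) (j,l) the entry
   of the (k,l) block at position (i,j), i.e. X = sum_{k,l} X_{kl} ⊗ E_{kl}. *)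
Definition tens_id (C : numClosedFieldType) (d : nat) (T : 'M[C]_d -> 'M[C]_d)
  (X : ('I_d * 'I_d)%type -> ('I_d * 'I_d)%type -> C) :
  ('I_d * 'I_d)%type -> ('I_d * 'I_d)%type -> C :=
  fun p q => T (\matrix_(i, j) X (i, p.2) (j, q.2)) p.1 q.1.

Definition completely_positive (C : numClosedFieldType) (d : nat)
  (T : 'M[C]_d -> 'M[C]_d) : Prop :=
  forall X : ('I_d * 'I_d)%type -> ('I_d * 'I_d)%type -> C,
    psd_on X -> psd_on (tens_id T X).

Definition adjmx (C : numClosedFieldType) (d : nat) (Y : 'M[C]_d) : 'M[C]_d :=
  (map_mx Num.conj Y)^T.

From HB Require Import structures.
From mathcomp Require Import all_boot all_order all_algebra ring.
From Stdlib Require Import Classical.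
Set Implicit Arguments. Unset Strict Implicit. Unset Printing Implicit Defensive.
Import Order.TTheory GRing.Theory Num.Theory.
Local Open Scope ring_scope.

(* A positive map T preserves hermiticity, so the trace of
   the representing matrix of T_Y := Y^dagger T(.) Y is real for every Y;
   suppose it is never negative.  Every psd X on C^d (x) C^d is a sum of
   rank-one matrices u u^dagger (peel off one column and pass to the Schur
   complement), and for such X a direct computation gives
   <w, (T (x) id)(u u^dagger) w> = tr hat(T_Y) with Y_ai = sum_k conj(u_ik) w_ak.
   Hence T (x) id is positive, i.e. T is completely positive. *)

Lemma sumr_deltal (R : pzSemiRingType) (I : finType) (i : I) (F : I -> R) :
  \sum_k (k == i)%:R * F k = F i.
Proof.
under eq_bigr => k _ do rewrite mulr_natl mulrb.
by rewrite -big_mkcond big_pred1_eq.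
Qed.

Lemma sumr_deltar (R : pzSemiRingType) (I : finType) (i : I) (F : I -> R) :
  \sum_k F k * (k == i)%:R = F i.
Proof.
under eq_bigr => k _ do rewrite mulr_natr mulrb.
by rewrite -big_mkcond big_pred1_eq.
Qed.

Lemma mxtrace_lin_mx (R : pzSemiRingType) m n (f : 'M[R]_(m, n) -> 'M[R]_(m, n)) :
  \tr (lin_mx f) = \sum_i \sum_j f (delta_mx i j) i j.
Proof.
rewrite /mxtrace (reindex _ (curry_mxvec_bij m n)) pair_bigA /=.
by apply: eq_bigr => -[i j] _; rewrite /lin_mx /lin1_mx mxE /= vec_mx_delta mxvecE.
Qed.

Lemma linear_mx_expand (R : pzRingType) m n p q
    (T : {linear 'M[R]_(m, n) -> 'M[R]_(p, q)}) (A : 'M[R]_(m, n)) a b :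
  T A a b = \sum_i \sum_j A i j * T (delta_mx i j) a b.
Proof.
rewrite {1}[A]matrix_sum_delta linear_sum summxE; apply: eq_bigr => i _.
by rewrite linear_sum summxE; apply: eq_bigr => j _; rewrite linearZ mxE.
Qed.

Lemma exchange_big2 (V : nmodType) (I J K L : finType) (F : I -> J -> K -> L -> V) :
  \sum_i \sum_j \sum_k \sum_l F i j k l = \sum_k \sum_l \sum_i \sum_j F i j k l.
Proof.
rewrite pair_bigA; under eq_bigr => p _ do rewrite pair_bigA.
rewrite exchange_big [RHS]pair_bigA /=.
by under [RHS]eq_bigr => q _ do rewrite pair_bigA.
Qed.

Section SesquilinearForms.
Variables (C : numClosedFieldType) (I : finType).
Implicit Types (R : I -> I -> C) (u v x y : I -> C).

Definition sform R x y := \sum_i \sum_j Num.conj (x i) * R i j * y j.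

Definition rank1 u : I -> I -> C := fun i j => u i * Num.conj (u j).

Definition basis_vec (s : I) (t : C) : I -> C := fun k => t * (k == s)%:R.

Definition herm_on R := forall i j, R j i = Num.conj (R i j).

Lemma sformDl R x1 x2 y : sform R (fun k => x1 k + x2 k) y = sform R x1 y + sform R x2 y.
Proof.
rewrite /sform -big_split; apply: eq_bigr => i _; rewrite -big_split.
by apply: eq_bigr => j _; rewrite rmorphD !mulrDl.
Qed.

Lemma sformDr R x y1 y2 : sform R x (fun k => y1 k + y2 k) = sform R x y1 + sform R x y2.
Proof.
rewrite /sform -big_split; apply: eq_bigr => i _; rewrite -big_split.
by apply: eq_bigr => j _; rewrite mulrDr.
Qed.

Lemma sformB R Q x y :
  sform (fun i j => R i j - Q i j) x y = sform R x y - sform Q x y.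
Proof.
rewrite /sform -sumrB; apply: eq_bigr => i _; rewrite -sumrB.
by apply: eq_bigr => j _; rewrite mulrBr mulrBl.
Qed.

Lemma sform_outer (x' y' : I -> C) x y :
  sform (fun i j => x' i * y' j) x y =
  (\sum_i Num.conj (x i) * x' i) * \sum_j y' j * y j.
Proof.
rewrite /sform mulr_suml; apply: eq_bigr => i _; rewrite mulr_sumr.
by apply: eq_bigr => j _; ring.
Qed.

Lemma sumr_basis_vec (F : I -> C) s t : \sum_j F j * basis_vec s t j = F s * t.
Proof.
rewrite (eq_bigr (fun j => F j * t * (j == s)%:R)) ?sumr_deltar // => j _.
by rewrite mulrA.
Qed.

Lemma sform_basisl R s t y : sform R (basis_vec s t) y = Num.conj t * \sum_j R s j * y j.
Proof.
rewrite /sform (eq_bigr (fun i => (i == s)%:R * (Num.conj t * \sum_j R i j * y j))).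
  by rewrite sumr_deltal.
by move=> i _; rewrite !mulr_sumr; apply: eq_bigr => j _; rewrite rmorphM rmorph_nat /=; ring.
Qed.

Lemma sform_basisr R s t x : sform R x (basis_vec s t) = t * \sum_i Num.conj (x i) * R i s.
Proof.
rewrite /sform mulr_sumr; apply: eq_bigr => i _.
rewrite (eq_bigr (fun j => (j == s)%:R * (t * (Num.conj (x i) * R i j)))) ?sumr_deltal //.
by move=> j _; rewrite /basis_vec; ring.
Qed.

Lemma sform_basis_vec R s s' a b :
  sform R (basis_vec s a) (basis_vec s' b) = Num.conj a * R s s' * b.
Proof. by rewrite sform_basisl sumr_basis_vec mulrA. Qed.

Lemma sform_eq0 D : (forall v, sform D v v = 0) -> forall i j, D i j = 0.
Proof.
move=> D0 i j.
have Dt t : t * D i j + Num.conj t * D j i = 0.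
  have := D0 (fun k => basis_vec i 1 k + basis_vec j t k).
  rewrite sformDl !sformDr D0 add0r D0 addr0 !sform_basis_vec rmorph1 !mul1r mulr1.
  by rewrite mulrC.
have := Dt 'i; rewrite conjCi mulNr -mulrBr => /eqP.
rewrite mulf_eq0 (negbTE (neq0Ci _)) subr_eq0 => /eqP eDij.
have := Dt 1; rewrite rmorph1 !mul1r eDij -mulr2n => /eqP.
by rewrite mulrn_eq0 => /eqP.
Qed.

Lemma herm_on_sum_col R x s : herm_on R ->
  \sum_i Num.conj (x i) * R i s = Num.conj (\sum_j R s j * x j).
Proof.
by move=> hR; rewrite rmorph_sum; apply: eq_bigr => i _; rewrite rmorphM /= -hR mulrC.
Qed.

Lemma sform_add_basis R v s t : herm_on R ->
  let a := \sum_j R s j * v j in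
  sform R (fun k => v k + basis_vec s t k) (fun k => v k + basis_vec s t k) =
  sform R v v + Num.conj t * a + t * Num.conj a + t * Num.conj t * R s s.
Proof.
move=> hR a; rewrite sformDl !sformDr !sform_basisl !sform_basisr herm_on_sum_col //.
by rewrite sumr_basis_vec -/a; ring.
Qed.

Lemma eq_psd_on R Q : (forall i j, R i j = Q i j) -> psd_on R -> psd_on Q.
Proof.
move=> eRQ [hR pos]; split=> [i j|v]; first by rewrite -!eRQ.
by under eq_bigr => i _ do under eq_bigr => j _ do rewrite -eRQ; apply: pos.
Qed.

Lemma psd_on_sum (J : Type) (r : seq J) (F : J -> I -> I -> C) :
  (forall k, psd_on (F k)) -> psd_on (fun i j => \sum_(k <- r) F k i j).
Proof.
move=> psdF; split=> [i j|v].
  by rewrite rmorph_sum; apply: eq_bigr => k _; have [-> _] := psdF k.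
change (0 <= sform (fun i j => \sum_(k <- r) F k i j) v v).
have -> : sform (fun i j => \sum_(k <- r) F k i j) v v = \sum_(k <- r) sform (F k) v v.
  rewrite /sform; under eq_bigr => i _ do under eq_bigr => j _ do
    rewrite mulr_sumr mulr_suml.
  by under eq_bigr => i _ do rewrite exchange_big; rewrite exchange_big.
by apply: sumr_ge0 => k _; have [_ ->] := psdF k.
Qed.

Lemma rank1_psd_on u : psd_on (rank1 u).
Proof.
split=> [i j|v]; first by rewrite /rank1 rmorphM /= conjCK mulrC.
change (0 <= sform (rank1 u) v v); rewrite sform_outer.
have -> : \sum_j Num.conj (u j) * v j = Num.conj (\sum_i Num.conj (v i) * u i).
  by rewrite rmorph_sum; apply: eq_bigr => i _; rewrite rmorphM /= conjCK mulrC.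
exact: mul_conjC_ge0.
Qed.

Lemma psd_on_diag_ge0 R s : psd_on R -> 0 <= R s s.
Proof.
case=> _ pos; have : 0 <= sform R (basis_vec s 1) (basis_vec s 1) := pos _.
by rewrite sform_basis_vec rmorph1 mul1r mulr1.
Qed.

(* With R s s = 0 the form along e_j + t e_s is affine in t, so it cannot stay
   nonnegative unless R s j = 0. *)
Lemma psd_on_diag_eq0 R s j : psd_on R -> R s s = 0 -> R s j = 0.
Proof.
move=> psdR rs0; have [hR pos] := psdR.
apply/eqP; apply: contraT => a0; set a := R s j in a0.
set b := R j j + 1; have b_gt0 : 0 < b by rewrite ltr_wpDl ?psd_on_diag_ge0.
set t := - b / Num.conj a; set w := fun k => basis_vec j 1 k + basis_vec s t k.
have : 0 <= sform R w w := pos w.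
have ta : t * Num.conj a = - b by rewrite /t !mulNr divfK ?conjC_eq0.
rewrite sform_add_basis // sform_basis_vec rmorph1 mul1r mulr1 rs0 mulr0 addr0.
have -> : \sum_k R s k * basis_vec j 1 k = a by rewrite sumr_basis_vec mulr1.
have ta' : Num.conj t * a = - b.
  by rewrite -[a]conjCK -rmorphM ta rmorphN /= geC0_conj ?ltW.
have -> : R j j + Num.conj t * a + t * Num.conj a = - (b + 1) by rewrite ta ta' /b; ring.
by rewrite oppr_ge0 lt_geF // addr_gt0 ?ltr01.
Qed.

Definition schur R s : I -> I -> C := fun i j => R i j - R i s * (R s j / R s s).

Lemma schur_psd_on R s : psd_on R -> R s s != 0 -> psd_on (schur R s).
Proof.
move=> [hR pos] r0; set r := R s s in r0 *.
have cr : Num.conj r = r by rewrite /r -hR.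
split=> [i j|v].
  by rewrite /schur rmorphB !rmorphM /= fmorphV /= cr -!hR; congr (_ - _); ring.
change (0 <= sform (schur R s) v v).
set a := \sum_j R s j * v j; set t := - a / r.
have -> : sform (schur R s) v v =
    sform R (fun k => v k + basis_vec s t k) (fun k => v k + basis_vec s t k).
  rewrite sform_add_basis // -/a -/r.
  rewrite /schur (sformB R (fun i j => R i s * (R s j / r))).
  rewrite (sform_outer (fun i => R i s) (fun j => R s j / r)).
  have -> : \sum_j R s j / r * v j = a / r.
    by rewrite /a mulr_suml; apply: eq_bigr => j _; ring.
  rewrite herm_on_sum_col // /t rmorphM rmorphN fmorphV /= cr -/a.
  by field.
exact: pos.
Qed.

Lemma psd_on_rank1_sum R : psd_on R ->
  exists us : seq (I -> C), forall i j, R i j = \sum_(u <- us) rank1 u i j.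
Proof.
move=> psdR; have [n] := ubnP #|[set i | R i i != 0]|.
elim: n R psdR => // n IH R psdR; rewrite ltnS => card_n; have [hR _] := psdR.
have [diag0 | [s]] := set_0Vmem [set i | R i i != 0].
  exists [::] => i j; rewrite big_nil; apply: psd_on_diag_eq0 psdR _.
  by apply/eqP; move: (in_set0 i); rewrite -diag0 inE => /negbFE.
rewrite inE => rs0; set r := R s s in rs0.
pose u i := R i s / sqrtC r.
have rank1_col i j : rank1 u i j = R i s * (R s j / r).
  have cq : Num.conj (sqrtC r) = sqrtC r by rewrite geC0_conj ?sqrtC_ge0 ?psd_on_diag_ge0.
  rewrite /rank1 /u rmorphM /= fmorphV /= cq -hR -[in RHS](sqrtCK r) expr2 invfM; ring.
have [|us Hus] := IH (schur R s) (schur_psd_on psdR rs0).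
  apply: leq_trans card_n.
  rewrite (cardsD1 s [set i | R i i != 0]) inE rs0 add1n ltnS subset_leq_card //.
  apply/subsetP => i; rewrite !inE; apply: contraR; rewrite negb_and !negbK.
  case/orP => [/eqP -> | /eqP rii0]; first by rewrite /schur -/r mulrCA divff // mulr1 subrr.
  by rewrite /schur rii0 (psd_on_diag_eq0 _ psdR rii0) mul0r subrr.
exists (u :: us) => i j; rewrite big_cons -Hus rank1_col /schur.
by rewrite addrC subrK.
Qed.
End SesquilinearForms.

Section PositiveMaps.
Variables (C : numClosedFieldType) (d : nat).
Implicit Types (A B Y : 'M[C]_d) (T : {linear 'M[C]_d -> 'M[C]_d}).
Implicit Types (X : 'I_d * 'I_d -> 'I_d * 'I_d -> C) (p q : 'I_d * 'I_d).

Definition sandwich (T : 'M[C]_d -> 'M[C]_d) Y rho := adjmx Y *m T rho *m Y.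

Lemma psd_rank1 (u : 'I_d -> C) : psd (\matrix_(i, j) rank1 u i j).
Proof. by apply: eq_psd_on (rank1_psd_on u) => i j; rewrite mxE. Qed.

Lemma positive_map_hermitian T : positive_map T ->
  forall i j a b, T (delta_mx i j) b a = Num.conj (T (delta_mx j i) a b).
Proof.
move=> posT i j a b; apply/eqP; rewrite -subr_eq0; apply/eqP; move: i j.
apply: sform_eq0 => v.
pose M := \matrix_(i, j) rank1 (fun k => Num.conj (v k)) i j.
have [hM _] := posT M (psd_rank1 _).
have TME a' b' :
    T M a' b' = \sum_i \sum_j Num.conj (v i) * v j * T (delta_mx i j) a' b'.
  rewrite linear_mx_expand; apply: eq_bigr => i _; apply: eq_bigr => j _.
  by rewrite mxE /rank1 conjCK.
transitivity (T M b a - Num.conj (T M a b)); last by rewrite hM subrr.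
rewrite [T M a b]TME exchange_big TME rmorph_sum -sumrB /sform.
apply: eq_bigr => i _; rewrite rmorph_sum -sumrB; apply: eq_bigr => j _.
by rewrite !rmorphM /= conjCK; ring.
Qed.

Lemma adjmx_mul_entry Y B i j :
  (adjmx Y *m B *m Y) i j = \sum_a \sum_b Num.conj (Y a i) * B a b * Y b j.
Proof.
rewrite !mxE; under eq_bigr => b _ do rewrite !mxE mulr_suml.
rewrite exchange_big /=; apply: eq_bigr => a _; apply: eq_bigr => b _.
by rewrite !mxE.
Qed.

Lemma sform_adjmx_mul Y B (v w : 'I_d -> C) :
  sform (adjmx Y *m B *m Y) v w =
  sform B (fun a => \sum_i Y a i * v i) (fun b => \sum_j Y b j * w j).
Proof.
rewrite /sform; transitivity (\sum_i \sum_j \sum_a \sum_b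
    Num.conj (v i) * Num.conj (Y a i) * B a b * Y b j * w j).
  apply: eq_bigr => i _; apply: eq_bigr => j _.
  rewrite adjmx_mul_entry mulr_sumr mulr_suml; apply: eq_bigr => a _.
  by rewrite mulr_sumr mulr_suml; apply: eq_bigr => b _; ring.
rewrite exchange_big2; apply: eq_bigr => a _; apply: eq_bigr => b _.
rewrite rmorph_sum !mulr_suml; apply: eq_bigr => i _.
rewrite mulr_sumr; apply: eq_bigr => j _.
by rewrite rmorphM /=; ring.
Qed.

Lemma psd_adjmx_mul Y B : psd B -> psd (adjmx Y *m B *m Y).
Proof.
move=> [hB posB]; split=> [i j|v].
  rewrite !adjmx_mul_entry rmorph_sum exchange_big; apply: eq_bigr => a _.
  rewrite rmorph_sum; apply: eq_bigr => b _.
  by rewrite !rmorphM /= conjCK -hB; ring.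
change (0 <= sform (adjmx Y *m B *m Y) v v); rewrite sform_adjmx_mul.
exact: posB.
Qed.

Lemma positive_map_sandwich (T : 'M[C]_d -> 'M[C]_d) Y :
  positive_map T -> positive_map (sandwich T Y).
Proof. by move=> posT A /posT; apply: psd_adjmx_mul. Qed.

Lemma mxtrace_sandwich (T : 'M[C]_d -> 'M[C]_d) Y :
  \tr (lin_mx (sandwich T Y)) =
  \sum_i \sum_j \sum_a \sum_b Num.conj (Y a i) * T (delta_mx i j) a b * Y b j.
Proof.
rewrite mxtrace_lin_mx; apply: eq_bigr => i _.
by apply: eq_bigr => j _; rewrite adjmx_mul_entry.
Qed.

Lemma mxtrace_sandwich_real T Y : positive_map T -> \tr (lin_mx (sandwich T Y)) \is Num.real.
Proof.
move=> /positive_map_hermitian hT; rewrite CrealE mxtrace_sandwich; apply/eqP.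
rewrite rmorph_sum exchange_big; apply: eq_bigr => j _.
rewrite rmorph_sum; apply: eq_bigr => i _.
rewrite rmorph_sum exchange_big; apply: eq_bigr => b _.
rewrite rmorph_sum; apply: eq_bigr => a _.
by rewrite !rmorphM /= conjCK -hT; ring.
Qed.

Lemma tens_idE T X p q :
  tens_id T X p q = \sum_i \sum_j X (i, p.2) (j, q.2) * T (delta_mx i j) p.1 q.1.
Proof.
rewrite /tens_id linear_mx_expand; apply: eq_bigr => i _; apply: eq_bigr => j _.
by rewrite mxE.
Qed.

Lemma sform_tens_id_rank1 T (u w : 'I_d * 'I_d -> C) :
  let Y := \matrix_(a, i) \sum_k Num.conj (u (i, k)) * w (a, k) in
  sform (tens_id T (rank1 u)) w w = \tr (lin_mx (sandwich T Y)).
Proof.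
move=> Y; rewrite mxtrace_sandwich /sform.
pose G i j a k b l := Num.conj (w (a, k)) * u (i, k) * T (delta_mx i j) a b *
  Num.conj (u (j, l)) * w (b, l).
transitivity (\sum_p \sum_q \sum_i \sum_j G i j p.1 p.2 q.1 q.2).
  apply: eq_bigr => -[a k] _; apply: eq_bigr => -[b l] _.
  rewrite tens_idE mulr_sumr mulr_suml; apply: eq_bigr => i _.
  by rewrite mulr_sumr mulr_suml; apply: eq_bigr => j _; rewrite /rank1 /G; ring.
rewrite exchange_big2; apply: eq_bigr => i _; apply: eq_bigr => j _.
transitivity (\sum_a \sum_k \sum_b \sum_l G i j a k b l).
  by rewrite [RHS]pair_bigA; under [RHS]eq_bigr => p _ do rewrite pair_bigA.
apply: eq_bigr => a _; rewrite exchange_big; apply: eq_bigr => b _.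
rewrite !mxE rmorph_sum !mulr_suml; apply: eq_bigr => k _.
rewrite mulr_sumr; apply: eq_bigr => l _.
by rewrite rmorphM /= conjCK /G; ring.
Qed.

Lemma tens_id_hermitian T X : positive_map T -> herm_on X -> herm_on (tens_id T X).
Proof.
move=> /positive_map_hermitian hT hX p q; rewrite !tens_idE rmorph_sum exchange_big.
apply: eq_bigr => j _; rewrite rmorph_sum; apply: eq_bigr => i _.
by rewrite rmorphM /= -hX -hT.
Qed.

Lemma completely_positive_of_mxtrace_ge0 T : positive_map T ->
  (forall Y, 0 <= \tr (lin_mx (sandwich T Y))) -> completely_positive T.
Proof.
move=> posT trY X /psd_on_rank1_sum [us Xus].
apply: (@eq_psd_on _ _ (fun p q => \sum_(u <- us) tens_id T (rank1 u) p q)).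
  move=> p q; rewrite tens_idE; under [RHS]eq_bigr => i _ do under eq_bigr => j _ do
    rewrite Xus mulr_suml.
  under [LHS]eq_bigr => u _ do rewrite tens_idE.
  by rewrite exchange_big; apply: eq_bigr => i _; rewrite exchange_big.
apply: psd_on_sum => u; split; first exact/tens_id_hermitian/(rank1_psd_on u).1.
move=> w; change (0 <= sform (tens_id T (rank1 u)) w w).
by rewrite sform_tens_id_rank1.
Qed.
End PositiveMaps.

Theorem mainTheorem8 (C : numClosedFieldType) (d : nat)
  (T : {linear 'M[C]_d -> 'M[C]_d}) :
  positive_map T -> ~ completely_positive T ->
  exists Y : 'M[C]_d,
    positive_map (fun rho => adjmx Y *m T rho *m Y) /\
    \tr (lin_mx (fun rho : 'M[C]_d => adjmx Y *m T rho *m Y)) < 0.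
Proof.
move=> posT notCP; apply: NNPP => noY.
apply/notCP/(completely_positive_of_mxtrace_ge0 posT) => Y.
rewrite real_leNgt ?real0 ?mxtrace_sandwich_real //; apply/negP => tr_lt0.
by apply: noY; exists Y; split; first exact: positive_map_sandwich.
Qed.
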